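(* For every graph $G$ on $m\ge 6$ vertices, $\lambda_3\ge d_6$, where $\lambda_3$ is the third largest eigenvalue of the Laplacian matrix $L(G)$ and $d_6$ is the sixth largest vertex degree of $G$.
   Context: All graphs are finite, simple, unweighted and undirected. $L(G)=D(G)-A(G)$ with $A(G)$ the adjacency matrix and $D(G)$ the diagonal matrix of degrees. Laplacian eigenvalues $\lambda_1\ge\lambda_2\ge\cdots$ and degrees $d_1\ge d_2\ge\cdots$ are listed in nonincreasing order with multiplicity. *)

From HB Require Import structures.
From mathcomp Require Import all_boot all_order all_algebra.
Set Implicit Arguments. Unset Strict Implicit. Unset Printing Implicit Defensive.
Import Order.TTheory GRing.Theory Num.Theory.

Definition simple_graph (m : nat) (e : rel 'I_m) : Prop :=
  (forall i j, e i j = e j i) /\ (forall i, e i i = false).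

Definition deg (m : nat) (e : rel 'I_m) (i : 'I_m) : nat := #|[set j | e i j]|.

Definition degree_seq (m : nat) (e : rel 'I_m) : seq nat :=
  sort geq [seq deg e i | i <- enum 'I_m].

Local Open Scope ring_scope.

Definition laplacian (R : pzRingType) (m : nat) (e : rel 'I_m) : 'M[R]_m :=
  \matrix_(i, j) ((if i == j then (deg e i)%:R else 0) - (e i j)%:R).

Definition laplacian_spectrum (R : rcfType) (m : nat) (e : rel 'I_m)
  (lam : seq R) : Prop :=
  [/\ size lam = m,
      sorted (fun x y => y <= x) lam &
      char_poly (laplacian R e) = \prod_(x <- lam) ('X - x%:P)].

(* Let d be the sixth largest degree and suppose lambda_3 < d.
   - Six distinct vertices have degree at least d (top_degree_vertices).
   - Encode a "test vector" by a pair (a, b) of vertices: e_a if a = b, and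
     e_a - e_b otherwise.  A finite computation over all 2^15 graphs on six
     vertices (six_vertex_certificate) yields, on the six chosen vertices,
     three test vectors that are pairwise orthogonal for the adjacency form
     and linearly independent (pivot_rank).
   - On their span the form of L - d is nonnegative (test_form_nonneg): the
     degree part is nonnegative and the adjacency part is diagonal, with
     entries 0 or -2 A_ab.
   - By the easy half of Courant-Fischer (hermitian_eigen_count), at most
     m - 3 eigenvalues of L are then below d, whereas lambda_3 < d puts
     m - 2 of them below d (laplacian_eigen_count).
   The spectral theorem is used over R[i], where the Laplacian is Hermitian. *)

From HB Require Import structures.
From mathcomp Require Import all_boot all_order all_algebra.
From mathcomp Require Import zify ring.
From mathcomp.real_closed Require Import complex.
Import Order.TTheory GRing.Theory Num.Theory.
Set Implicit Arguments. Unset Strict Implicit. Unset Printing Implicit Defensive.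

Lemma card_set_count (T : finType) (P : pred T) : #|[set u | P u]| = count P (enum T).
Proof.
rewrite cardsE cardE /enum_mem size_filter count_filter.
by apply: eq_count => x; rewrite !inE andbT.
Qed.

Lemma top_degree_vertices (m : nat) (e : rel 'I_m) (k : nat) : k < m ->
  exists f : 'I_k.+1 -> 'I_m,
    injective f /\ forall i, nth 0 (degree_seq e) k <= deg e (f i).
Proof.
move=> lt_km; set ds := degree_seq e; set T := [set u | nth 0 ds k <= deg e u].
have size_ds : size ds = m by rewrite size_sort size_map size_enum_ord.
have ds_sorted : sorted geq ds by apply: sort_sorted => x y; exact: leq_total.
have card_T : k.+1 <= #|T|.
  rewrite card_set_count -count_map.
  have -> : count (leq (nth 0 ds k)) [seq deg e u | u <- enum 'I_m] =
            count (leq (nth 0 ds k)) ds by apply/permP; rewrite perm_sym perm_sort.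
  rewrite -[X in count _ X](cat_take_drop k.+1) count_cat; apply: leq_trans (leq_addr _ _).
  have size_take : size (take k.+1 ds) = k.+1 by rewrite size_takel // size_ds.
  suff -> : count (leq (nth 0 ds k)) (take k.+1 ds) = k.+1 by [].
  apply/eqP; rewrite -{2}size_take -all_count; apply/(all_nthP 0) => i; rewrite size_take => lt_ik.
  have geq_trans : transitive geq by move=> x y z /= le_yx le_zy; apply: leq_trans le_zy le_yx.
  rewrite nth_take //; apply: (sorted_leq_nth geq_trans leqnn 0 ds_sorted) => //.
  - by rewrite inE size_ds; apply: leq_trans lt_ik _.
  - by rewrite inE size_ds.
exists (fun i => enum_val (widen_ord card_T i)); split.
  by move=> i j /enum_val_inj [] /val_inj.
by move=> i; have := enum_valP (widen_ord card_T i); rewrite inE.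
Qed.

(* A test vector is encoded by a pair (a, b) of vertices: it is the unit
   vector e_a when a = b, and e_a - e_b otherwise.  For such vectors w_p, w_q
   and an adjacency relation [adj], the entry w_p A w_q^T of the adjacency
   form is the difference gram_pos - gram_neg of two natural numbers. *)
Section TestPairs.
Variables (T : eqType) (adj : rel T).

Definition in_support (p : T * T) (u : T) : bool :=
  (u == p.1) || ((p.1 != p.2) && (u == p.2)).

Definition gram_pos (p q : T * T) : nat :=
  adj p.1 q.1 + [&& p.1 != p.2, q.1 != q.2 & adj p.2 q.2].

Definition gram_neg (p q : T * T) : nat :=
  ((q.1 != q.2) && adj p.1 q.2) + ((p.1 != p.2) && adj p.2 q.1).

Lemma gram_pos_diag (p : T * T) : irreflexive adj -> gram_pos p p = 0.
Proof. by move=> irr; rewrite /gram_pos !irr !andbF. Qed.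

Lemma gram_pos_sym (p q : T * T) : symmetric adj -> gram_pos p q = gram_pos q p.
Proof. by move=> sym; rewrite /gram_pos (sym q.1) (sym q.2) andbCA. Qed.

Lemma gram_neg_sym (p q : T * T) : symmetric adj -> gram_neg p q = gram_neg q p.
Proof. by move=> sym; rewrite /gram_neg (sym q.1) (sym q.2) addnC. Qed.

End TestPairs.

Lemma eq_gram_pos (T : eqType) (adj adj' : rel T) :
  adj =2 adj' -> gram_pos adj =2 gram_pos adj'.
Proof. by move=> E p q; rewrite /gram_pos !E. Qed.

Lemma eq_gram_neg (T : eqType) (adj adj' : rel T) :
  adj =2 adj' -> gram_neg adj =2 gram_neg adj'.
Proof. by move=> E p q; rewrite /gram_neg !E. Qed.

Definition pair_map (T U : Type) (h : T -> U) (p : T * T) : U * U := (h p.1, h p.2).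

Section TransportPairs.
Variables (T U : eqType) (h : T -> U) (adj : rel U).
Hypothesis h_inj : injective h.

Lemma in_support_map p u : in_support (pair_map h p) (h u) = in_support p u.
Proof. by rewrite /in_support /= !(inj_eq h_inj). Qed.

Lemma gram_pos_map p q :
  gram_pos adj (pair_map h p) (pair_map h q) = gram_pos (relpre h adj) p q.
Proof. by rewrite /gram_pos /= !(inj_eq h_inj). Qed.

Lemma gram_neg_map p q :
  gram_neg adj (pair_map h p) (pair_map h q) = gram_neg (relpre h adj) p q.
Proof. by rewrite /gram_neg /= !(inj_eq h_inj). Qed.

End TransportPairs.

(* A computation on the 2^15 graphs with vertex set {0,...,5}, encoded by the
   bits of their 15 possible edges, shows that each of them admits three test
   pairs taken from a fixed list of [candidates] which are pairwise orthogonal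
   for its adjacency form and linearly independent, the latter being certified
   by triangular pivots. *)
Definition edges6 : seq (nat * nat) :=
  [:: (0, 1); (0, 2); (0, 3); (0, 4); (0, 5); (1, 2); (1, 3); (1, 4); (1, 5);
      (2, 3); (2, 4); (2, 5); (3, 4); (3, 5); (4, 5)].

Lemma edges6E :
  edges6 = [seq ij : nat * nat <- [seq (i, j) | i <- iota 0 6, j <- iota 0 6] | ij.1 < ij.2].
Proof. by []. Qed.

(* The position of the pair (x, y) in [edges6]; it is 15 if x < y < 6 fails. *)
Definition edge_index (x y : nat) : nat :=
  find (fun ij : nat * nat => (ij.1 == x) && (ij.2 == y)) edges6.

Definition graph_of_bits (bs : seq bool) : rel nat := fun x y =>
  nth false bs (edge_index (minn x y) (maxn x y)).

Definition bits_of_graph (g : rel nat) : seq bool := [seq g ij.1 ij.2 | ij <- edges6].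

Lemma mem_edges6 x y : ((x, y) \in edges6) = (x < y < 6).
Proof.
rewrite edges6E mem_filter; apply/andP/andP => [[lt_xy /allpairsP [[i j] []]] | [lt_xy lt_y6]].
  by rewrite !mem_iota /= => _ lt_j6 [_ eq_yj]; rewrite eq_yj in lt_xy *.
by split=> //; apply: allpairs_f; rewrite mem_iota // (ltn_trans lt_xy lt_y6).
Qed.

Lemma edge_indexE x y : edge_index x y = index (x, y) edges6.
Proof. by apply: eq_find => -[a b]; rewrite /= xpair_eqE. Qed.

Lemma bit_edge (g : rel nat) x y : x < y < 6 ->
  nth false (bits_of_graph g) (edge_index x y) = g x y.
Proof.
rewrite edge_indexE -mem_edges6 => xy_in.
rewrite (nth_map (0, 0)); last by rewrite index_mem; exact: xy_in.
by have /= -> := nth_index (0, 0) xy_in.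
Qed.

Lemma bit_nonedge (g : rel nat) x y : ~~ (x < y < 6) ->
  nth false (bits_of_graph g) (edge_index x y) = false.
Proof.
rewrite edge_indexE -mem_edges6 => xy_out; apply: nth_default.
rewrite size_map (memNindex xy_out); exact: leqnn.
Qed.

Lemma bits_of_graphK (g : rel nat) : symmetric g -> irreflexive g ->
  (forall x y, g x y -> (x < 6) && (y < 6)) -> graph_of_bits (bits_of_graph g) =2 g.
Proof.
move=> g_sym g_irr g_supp x y.
wlog le_xy : x y / x <= y.
  move=> oriented; have [le_xy | /ltnW le_yx] := leqP x y; first exact: oriented.
  by rewrite /graph_of_bits minnC maxnC g_sym; apply: oriented.
rewrite /graph_of_bits (minn_idPl le_xy) (maxn_idPr le_xy).
have [xy_edge | xy_nonedge] := boolP (x < y < 6); first exact: bit_edge.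
rewrite bit_nonedge //; apply/esym/negP => g_xy.
have /andP[_ lt_y6] := g_supp _ _ g_xy.
rewrite lt_y6 andbT -leqNgt in xy_nonedge.
by rewrite (@anti_leq x y) ?le_xy // g_irr in g_xy.
Qed.

(* For a fast evaluation, a graph is tabulated once before it is queried. *)
Definition adjacency_table (g : rel nat) : seq (seq bool) :=
  [seq [seq g i j | j <- iota 0 6] | i <- iota 0 6].

Definition table_graph (t : seq (seq bool)) : rel nat := fun x y => nth false (nth [::] t x) y.

Lemma adjacency_tableK (g : rel nat) : (forall x y, g x y -> (x < 6) && (y < 6)) ->
  table_graph (adjacency_table g) =2 g.
Proof.
move=> g_supp x y; rewrite /table_graph.
have g_out : ~~ ((x < 6) && (y < 6)) -> g x y = false.
  by move=> out; apply/negP => /g_supp; apply/negP.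
have [lt_x6|le6x] := ltnP x 6; last first.
  have no_row : size (adjacency_table g) <= x by rewrite size_map size_iota.
  by rewrite (nth_default _ no_row) nth_nil g_out // ltnNge le6x.
rewrite (nth_map 0) ?size_iota // nth_iota //.
have [lt_y6|le6y] := ltnP y 6; last first.
  have no_entry : size [seq g x j | j <- iota 0 6] <= y by rewrite size_map size_iota.
  by rewrite (nth_default _ no_entry) g_out // (ltnNge y) le6y andbF.
by rewrite (nth_map 0) ?size_iota // nth_iota.
Qed.

Fixpoint allbits (n : nat) : seq (seq bool) :=
  if n is n'.+1 then [seq b :: s | b <- [:: true; false], s <- allbits n'] else [:: [::]].

Lemma allbits_complete (s : seq bool) : s \in allbits (size s).
Proof.
elim: s => [|b s IH] //=.
by rewrite !mem_cat; case: b; rewrite (map_f _ IH) ?orbT.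
Qed.

(* A candidate lists three test pairs and, for each, a pivot vertex. *)
Definition candidate := (seq (nat * nat) * seq nat)%type.

Definition orthogonal_candidate (g : rel nat) (c : candidate) : bool :=
  pairwise (fun p q => gram_pos g p q == gram_neg g p q) c.1.

Definition triangular_candidate (c : candidate) : bool :=
  [&& size c.1 == 3, all (fun p => (p.1 < 6) && (p.2 < 6)) c.1, all (fun u => u < 6) c.2,
      all (fun k => in_support (nth (0, 0) c.1 k) (nth 0 c.2 k)) (iota 0 3) &
      all (fun k => all (fun l => (k < l) ==>
         ~~ in_support (nth (0, 0) c.1 l) (nth 0 c.2 k)) (iota 0 3)) (iota 0 3)].

Definition candidates : seq candidate := [::
  ([:: (0,1); (0,2); (0,0)], [:: 1; 2; 0]);
  ([:: (0,3); (0,4); (0,0)], [:: 3; 4; 0]);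
  ([:: (0,5); (0,0); (2,3)], [:: 5; 0; 2]);
  ([:: (0,2); (0,0); (1,3)], [:: 2; 0; 1]);
  ([:: (0,3); (0,0); (2,4)], [:: 3; 0; 2]);
  ([:: (0,1); (0,0); (3,5)], [:: 1; 0; 3]);
  ([:: (0,4); (0,0); (1,2)], [:: 4; 0; 1]);
  ([:: (0,3); (0,0); (1,4)], [:: 3; 0; 1]);
  ([:: (0,1); (0,0); (2,5)], [:: 1; 0; 2]);
  ([:: (0,1); (0,0); (2,3)], [:: 1; 0; 2]);
  ([:: (0,2); (0,0); (4,5)], [:: 2; 0; 4]);
  ([:: (0,5); (0,0); (1,3)], [:: 5; 0; 1]);
  ([:: (0,0); (1,2); (1,5)], [:: 0; 2; 1]);
  ([:: (0,5); (0,0); (1,2)], [:: 5; 0; 1]);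
  ([:: (0,2); (0,3); (0,0)], [:: 2; 3; 0]);
  ([:: (0,4); (0,0); (1,3)], [:: 4; 0; 1]);
  ([:: (0,2); (0,0); (1,4)], [:: 2; 0; 1]);
  ([:: (0,3); (0,0); (1,2)], [:: 3; 0; 1]);
  ([:: (0,1); (0,0); (2,4)], [:: 1; 0; 2]);
  ([:: (0,0); (1,2); (3,4)], [:: 0; 1; 3]);
  ([:: (0,2); (0,0); (1,5)], [:: 2; 0; 1]);
  ([:: (0,1); (0,0); (4,5)], [:: 1; 0; 4]);
  ([:: (0,1); (0,0); (3,4)], [:: 1; 0; 3]);
  ([:: (0,4); (0,0); (2,3)], [:: 4; 0; 2]);
  ([:: (0,2); (0,0); (3,5)], [:: 2; 0; 3]);
  ([:: (0,0); (1,2); (4,5)], [:: 0; 1; 4]);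
  ([:: (0,0); (1,2); (3,5)], [:: 0; 1; 3]);
  ([:: (0,2); (0,5); (0,0)], [:: 2; 5; 0]);
  ([:: (0,3); (0,0); (1,5)], [:: 3; 0; 1]);
  ([:: (0,0); (1,2); (1,3)], [:: 0; 2; 1]);
  ([:: (0,2); (0,0); (3,4)], [:: 2; 0; 3]);
  ([:: (0,0); (1,2); (1,4)], [:: 0; 2; 1]);
  ([:: (0,4); (0,5); (0,0)], [:: 4; 5; 0]);
  ([:: (0,3); (0,0); (2,5)], [:: 3; 0; 2]);
  ([:: (0,2); (0,4); (0,0)], [:: 2; 4; 0]);
  ([:: (0,1); (0,4); (0,0)], [:: 1; 4; 0]);
  ([:: (0,1); (0,5); (0,0)], [:: 1; 5; 0])
].

Lemma candidates_triangular : all triangular_candidate candidates.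
Proof. by vm_compute. Qed.

(* The search uses [find] rather than [has]: under call-by-value evaluation the
   boolean disjunctions of [has] would test every candidate. *)
Lemma candidates_cover : all (fun bs =>
  find (orthogonal_candidate (table_graph (adjacency_table (graph_of_bits bs))))
    candidates < size candidates) (allbits 15).
Proof. by vm_compute. Qed.

Lemma candidate_exists (g : rel nat) : symmetric g -> irreflexive g ->
  (forall x y, g x y -> (x < 6) && (y < 6)) ->
  exists2 c, c \in candidates & orthogonal_candidate g c.
Proof.
move=> g_sym g_irr g_supp.
have g_bits : graph_of_bits (bits_of_graph g) =2 g by apply: bits_of_graphK.
have g_table : table_graph (adjacency_table (graph_of_bits (bits_of_graph g))) =2 g.
  move=> x y; rewrite adjacency_tableK ?g_bits // => x' y'.
  by rewrite g_bits; apply: g_supp.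
have := allbits_complete (bits_of_graph g); rewrite size_map => /(allP candidates_cover).
rewrite -has_find => /hasP[c c_cand c_orth]; exists c => //.
apply: sub_pairwise c_orth => p q /=.
by rewrite (eq_gram_pos g_table) (eq_gram_neg g_table).
Qed.

Lemma six_vertex_certificate (g : rel 'I_6) : symmetric g -> irreflexive g ->
  exists (p : 'I_3 -> 'I_6 * 'I_6) (q : 'I_3 -> 'I_6),
  [/\ forall k l, k != l -> gram_pos g (p k) (p l) = gram_neg g (p k) (p l),
      forall k, in_support (p k) (q k) &
      forall k l : 'I_3, k < l -> ~~ in_support (p l) (q k)].
Proof.
move=> g_sym g_irr.
pose gN : rel nat := fun x y => [&& x < 6, y < 6 & g (inord x) (inord y)].
have gN_val : relpre val gN =2 g by move=> i j; rewrite /relpre /gN /= !ltn_ord !inord_val.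
have [c c_cand c_orth] : exists2 c, c \in candidates & orthogonal_candidate gN c.
  apply: candidate_exists => [x y | x | x y /and3P[-> ->]] //.
    by rewrite /gN g_sym andbCA.
  by rewrite /gN g_irr !andbF.
have /and5P[c_size c_pairs c_pivots c_piv c_tri] := allP candidates_triangular c c_cand.
set ps := c.1 in c_orth c_size c_pairs c_piv c_tri; set us := c.2 in c_pivots c_piv c_tri.
have ps_lt6 k : ((nth (0, 0) ps k).1 < 6) && ((nth (0, 0) ps k).2 < 6).
  have [lt_k | le_k] := ltnP k (size ps); last by rewrite nth_default.
  exact: (allP c_pairs) _ (mem_nth _ lt_k).
have us_lt6 k : nth 0 us k < 6.
  have [lt_k | le_k] := ltnP k (size us); last by rewrite nth_default.
  exact: (allP c_pivots) _ (mem_nth _ lt_k).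
pose p (k : 'I_3) := pair_map inord (nth (0, 0) ps k) : 'I_6 * 'I_6.
pose q (k : 'I_3) := inord (nth 0 us k) : 'I_6.
have val_p k : pair_map val (p k) = nth (0, 0) ps k.
  by case/andP: (ps_lt6 k) => ? ?; rewrite /pair_map /= !inordK // -surjective_pairing.
have gram_posE k l : gram_pos g (p k) (p l) = gram_pos gN (nth (0, 0) ps k) (nth (0, 0) ps l).
  by rewrite -!val_p (gram_pos_map _ val_inj) (eq_gram_pos gN_val).
have gram_negE k l : gram_neg g (p k) (p l) = gram_neg gN (nth (0, 0) ps k) (nth (0, 0) ps l).
  by rewrite -!val_p (gram_neg_map _ val_inj) (eq_gram_neg gN_val).
have in_supportE k l : in_support (p k) (q l) = in_support (nth (0, 0) ps k) (nth 0 us l).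
  by rewrite -(in_support_map val_inj) val_p /= inordK ?us_lt6.
have iota3 (k : 'I_3) : val k \in iota 0 3 by rewrite mem_iota ltn_ord.
have orth_lt (k l : 'I_3) : k < l -> gram_pos g (p k) (p l) = gram_neg g (p k) (p l).
  move=> lt_kl; rewrite gram_posE gram_negE; apply/eqP.
  by move/(pairwiseP (0, 0)): c_orth; apply; rewrite // inE (eqP c_size).
exists p, q; split.
- move=> k l; rewrite neq_ltn => /orP[/orth_lt // | /orth_lt].
  by rewrite gram_pos_sym // gram_neg_sym.
- by move=> k; rewrite in_supportE; apply: (allP c_piv _ (iota3 k)).
- move=> k l lt_kl; rewrite in_supportE.
  by have /implyP := allP (allP c_tri k (iota3 k)) l (iota3 l); apply.
Qed.

Local Open Scope ring_scope.
Local Open Scope sesquilinear_scope.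

Definition hform (C : numClosedFieldType) (m : nat) (M : 'M[C]_m) (v : 'rV[C]_m) : C :=
  (v *m M *m v^t*) 0 0.

Section HermitianForm.
Variables (C : numClosedFieldType) (m : nat).
Implicit Types (M N : 'M[C]_m) (d v z : 'rV[C]_m).

Lemma hformB M N v : hform (M - N) v = hform M v - hform N v.
Proof. by rewrite /hform mulmxBr mulmxBl !mxE. Qed.

Lemma hform_diag d z : hform (diag_mx d) z = \sum_u (z 0 u * (z 0 u)^*) * d 0 u.
Proof.
by rewrite /hform mul_mx_diag !mxE; apply: eq_bigr => u _; rewrite !mxE mulrAC.
Qed.

Lemma hform_diag_lt0 d z : z != 0 -> (forall u, z 0 u != 0 -> d 0 u < 0) ->
  hform (diag_mx d) z < 0.
Proof.
move=> /rV0Pn[u z_u] z_supp; rewrite hform_diag (bigD1 u) //=.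
rewrite -[ltRHS]addr0 ltr_leD //; first by rewrite pmulr_rlt0 ?mul_conjC_gt0 ?z_supp.
apply: sumr_le0 => w _; have [->|z_w] := eqVneq (z 0 w) 0; first by rewrite !mul0r.
by rewrite pmulr_rle0 ?mul_conjC_gt0 // ltW ?z_supp.
Qed.

Lemma hform_unitary (P : 'M[C]_m) M z : P \is unitarymx ->
  hform (P^t* *m M *m P) (z *m P) = hform M z.
Proof.
move=> /unitarymxP PP; rewrite /hform trmx_mul map_mxM.
by rewrite !mulmxA -(mulmxA z P) PP mulmx1 -!(mulmxA _ P) PP mulmx1.
Qed.

End HermitianForm.

Lemma pivot_rank (F : fieldType) (r m : nat) (W : 'M[F]_(r, m)) (q : 'I_r -> 'I_m) :
  (forall k, W k (q k) != 0) -> (forall k l : 'I_r, (k < l)%N -> W l (q k) = 0) ->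
  \rank W = r.
Proof.
move=> W_piv W_tri; apply/eqP; rewrite eqn_leq rank_leq_row /= leqNgt; apply/negP => lt_rank.
have : kermx W != 0 by rewrite -mxrank_eq0 mxrank_ker subn_eq0 -ltnNge.
case/rowV0Pn => c /sub_kermxP cW0; apply/negP; rewrite negbK; apply/eqP/rowP.
suff c0 n (k : 'I_r) : val k = n -> c 0 k = 0 by move=> k; rewrite mxE (c0 k).
elim/ltn_ind: n k => n IH k kn.
have := congr1 (fun u : 'rV_m => u 0 (q k)) cW0; rewrite !mxE (bigD1 k) //= big1 ?addr0.
  by move/eqP; rewrite mulf_eq0 (negbTE (W_piv k)) orbF => /eqP.
move=> l ne_lk; have [lt_lk|lt_kl] := ltnP l k.
  by rewrite (IH l) ?mul0r // -kn.
by rewrite W_tri ?mulr0 // ltn_neqAle lt_kl andbT val_eqE eq_sym.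
Qed.

Lemma row_space_meet (F : fieldType) (r s m : nat) (A : 'M[F]_(r, m)) (B : 'M[F]_(s, m)) :
  (m < \rank A + \rank B)%N -> exists2 v : 'rV_m, v != 0 & (v <= A)%MS && (v <= B)%MS.
Proof.
move=> big; have : (A :&: B)%MS != 0.
  rewrite -mxrank_eq0 -lt0n; move: big; rewrite -mxrank_sum_cap.
  by have := rank_leq_col (A + B)%MS; lia.
case/rowV0Pn => v v_AB v_nz; exists v => //.
by rewrite (submx_trans v_AB (capmxSl _ _)) (submx_trans v_AB (capmxSr _ _)).
Qed.

(* Easy half of the Courant-Fischer theorem: if the form of M - t is
   nonnegative on a subspace of dimension r, then at most m - r eigenvalues
   of the Hermitian matrix M lie below t.  Otherwise the subspace meets the
   span of the corresponding eigenvectors, on which the form is negative. *)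
Lemma hermitian_eigen_count (C : numClosedFieldType) (m r : nat) (M : 'M[C]_m) (t : C)
    (W : 'M[C]_(r, m)) :
  M \is hermsymmx -> \rank W = r ->
  (forall c : 'rV_r, 0 <= hform (M - t%:M) (c *m W)) ->
  (#|[set u : 'I_m | (spectral_diag M ord0 u < t)%R]| + r <= m)%N.
Proof.
move=> M_herm rank_W W_form.
set P := spectralmx M; set D := spectral_diag M; set I := [set u : 'I_m | D 0 u < t].
have P_unitary : P \is unitarymx by apply: spectral_unitarymx.
have M_shift : M - t%:M = P^t* *m diag_mx (D - const_mx t) *m P.
  have /orthomx_spectralP -> := hermitian_normalmx M_herm.
  rewrite invmx_unitary // linearB /= diag_const_mx mulmxBr mulmxBl mul_mx_scalar.
  by rewrite -scalemxAl -invmx_unitary // mulVmx ?unitarymx_unit // scalemx1.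
(* The rows of S are the unit vectors e_u, u in I, so the row space of S P
   is spanned by eigenvectors of M with eigenvalue below t. *)
pose S : 'M[C]_(#|I|, m) := \matrix_(i, u) (enum_val i == u)%:R.
have S_unitary : S \is unitarymx.
  apply/unitarymxP/matrixP => i j; rewrite !mxE (bigD1 (enum_val i)) //= big1 ?addr0.
    rewrite !mxE eqxx mul1r (inj_eq enum_val_inj) eq_sym.
    by case: (i == j); rewrite ?conjC1 ?conjC0.
  by move=> u /negbTE ne_u; rewrite !mxE eq_sym ne_u mul0r.
have rank_SP : \rank (S *m P) = #|I| by apply/mxrank_unitary/mul_unitarymx.
rewrite leqNgt -rank_W -rank_SP addnC; apply/negP => /row_space_meet.
case=> v v_nz /andP[/submxP[c v_c] /submxP[y v_y]].
set z := y *m S.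
have z_supp u : z 0 u != 0 -> u \in I.
  rewrite !mxE; apply: contraR => u_notI; rewrite big1 // => i _; rewrite !mxE.
  have [ei_u|_] := eqP; last by rewrite mulr0.
  by have := enum_valP i; rewrite ei_u (negbTE u_notI).
have z_nz : z != 0 by apply: contraNneq v_nz => z0; rewrite v_y mulmxA -/z z0 mul0mx.
have form_lt0 : hform (diag_mx (D - const_mx t)) z < 0.
  by apply: hform_diag_lt0 => // u /z_supp; rewrite inE !mxE subr_lt0.
have := W_form c; rewrite -v_c v_y mulmxA -/z M_shift hform_unitary //.
by rewrite (lt_geF form_lt0).
Qed.

Lemma sorted_count_lt (R : numDomainType) (s : seq R) (r : nat) (t : R) :
  sorted (fun x y => y <= x) s -> (r < size s)%N -> nth 0 s r < t ->
  (size s - r <= count (fun x => (x < t)%R) s)%N.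
Proof.
move=> s_sorted lt_r lt_t.
have ge_trans : transitive (fun x y : R => y <= x).
  by move=> y x z le_yx le_zy; apply: le_trans le_zy le_yx.
have drop_lt : all (fun x => x < t) (drop r s).
  apply/(all_nthP 0) => i; rewrite size_drop ltn_subRL => lt_i.
  rewrite nth_drop; apply: le_lt_trans lt_t.
  by apply: (sorted_leq_nth ge_trans lexx 0 s_sorted); rewrite ?inE ?leq_addr.
rewrite -[X in count _ X](cat_take_drop r) count_cat -size_drop.
by move: drop_lt; rewrite all_count => /eqP ->; apply: leq_addl.
Qed.

Lemma char_poly_diag_conj (F : fieldType) (n : nat) (P : 'M[F]_n) (d : 'rV[F]_n) :
  P \in unitmx -> char_poly (invmx P *m diag_mx d *m P) = \prod_(i < n) ('X - (d 0 i)%:P).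
Proof.
move=> P_unit; rewrite /char_poly.
have Pc_unit : map_mx polyC P \in unitmx by rewrite map_unitmx.
have -> : char_poly_mx (invmx P *m diag_mx d *m P) =
          invmx (map_mx polyC P) *m char_poly_mx (diag_mx d) *m map_mx polyC P.
  rewrite /char_poly_mx !map_mxM map_invmx mulmxBr mulmxBl mul_mx_scalar -scalemxAl.
  by rewrite mulVmx // scalemx1.
rewrite !det_mulmx mulrAC -det_mulmx mulVmx // det1 mul1r.
rewrite -/(char_poly _) char_poly_trig ?diag_mx_is_trig //.
by apply: eq_bigr => i _; rewrite mxE eqxx mulr1n.
Qed.

Lemma spectral_diag_roots (C : numClosedFieldType) (m : nat) (M : 'M[C]_m) (s : seq C) :
  M \is normalmx -> char_poly M = \prod_(x <- s) ('X - x%:P) ->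
  perm_eq [seq spectral_diag M ord0 u | u <- enum 'I_m] s.
Proof.
move=> /orthomx_spectralP M_diag char_M; apply: prod_XsubC_eq.
by rewrite big_map -char_M {2}M_diag char_poly_diag_conj ?spectral_unit // big_enum.
Qed.

Lemma laplacian_hermitian (C : numClosedFieldType) (m : nat) (e : rel 'I_m) :
  simple_graph e -> laplacian C e \is hermsymmx.
Proof.
move=> [e_sym e_irr]; apply/is_hermitianmxP; rewrite expr0 scale1r.
apply/matrixP => i j; rewrite !mxE rmorphB /= conjC_nat e_sym.
by case: (eqVneq i j) => [->|_]; rewrite ?conjC_nat ?rmorph0.
Qed.

Lemma laplacian_complex (R : rcfType) (m : nat) (e : rel 'I_m) :
  map_mx (real_complex R) (laplacian R e) = laplacian R[i] e.
Proof.
apply/matrixP => i j; rewrite !mxE rmorphB /= rmorph_nat.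
by case: eqP => _; rewrite ?rmorph_nat ?rmorph0.
Qed.

Lemma laplacian_eigen_count (R : rcfType) (m r : nat) (e : rel 'I_m) (lam : seq R) (t : R) :
  simple_graph e -> laplacian_spectrum e lam -> (r < m)%N -> nth 0 lam r < t ->
  (m - r <= #|[set u : 'I_m | (spectral_diag (laplacian R[i] e) ord0 u < t%:C%C)%R]|)%N.
Proof.
move=> e_simple [size_lam lam_sorted char_lam] lt_rm lt_t.
have char_C : char_poly (laplacian R[i] e) = \prod_(x <- map (real_complex R) lam) ('X - x%:P).
  by rewrite -laplacian_complex -map_char_poly char_lam map_prod_XsubC big_map.
have roots := spectral_diag_roots (hermitian_normalmx (laplacian_hermitian _ e_simple)) char_C.
rewrite card_set_count.
have -> : count (fun u => spectral_diag (laplacian R[i] e) ord0 u < t%:C%C) (enum 'I_m) =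
          count (fun x => x < t%:C%C) [seq spectral_diag (laplacian R[i] e) ord0 u | u <- enum 'I_m].
  by rewrite [RHS]count_map.
rewrite (permP roots) count_map.
rewrite (eq_count (a2 := fun x => x < t)) => [|x]; last by rewrite /= ltcR.
by rewrite -size_lam; apply: sorted_count_lt; rewrite ?size_lam.
Qed.

Section TestForm.
Variables (C : numClosedFieldType) (m : nat) (e : rel 'I_m).

Definition test_vector (p : 'I_m * 'I_m) (u : 'I_m) : C :=
  (u == p.1)%:R - ((p.1 != p.2) && (u == p.2))%:R.

Definition test_matrix (r : nat) (p : 'I_r -> 'I_m * 'I_m) : 'M[C]_(r, m) :=
  \matrix_(k, u) test_vector (p k) u.

Definition adjacency_mx : 'M[C]_m := \matrix_(u, v) (e u v)%:R.

Lemma test_vector_neq0 p u : (test_vector p u != 0) = in_support p u.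
Proof.
rewrite /test_vector /in_support; case: p => a b /=.
have [-> | ne_ua] := eqVneq u a.
  by rewrite andNb subr0 oner_eq0.
by rewrite sub0r oppr_eq0 pnatr_eq0; case: (_ && _).
Qed.

Lemma test_vector_conj p u : (test_vector p u)^* = test_vector p u.
Proof. by rewrite rmorphB /= !conjC_nat. Qed.

Lemma sum_test_vector p (h : 'I_m -> C) :
  \sum_u test_vector p u * h u = h p.1 - (p.1 != p.2)%:R * h p.2.
Proof.
have sum_delta z : \sum_u (u == z)%:R * h u = h z.
  by rewrite (bigD1 z) //= eqxx mul1r big1 ?addr0 // => u /negbTE->; rewrite mul0r.
under eq_bigr do rewrite mulrBl.
rewrite sumrB sum_delta; case: (p.1 != p.2) => /=.
  by rewrite mul1r sum_delta.
by rewrite mul0r big1 // => u _; rewrite mul0r.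
Qed.

Lemma test_gram r (p : 'I_r -> 'I_m * 'I_m) k l :
  (test_matrix p *m adjacency_mx *m (test_matrix p)^t*) k l =
  (gram_pos e (p k) (p l))%:R - (gram_neg e (p k) (p l))%:R.
Proof.
rewrite !mxE; under eq_bigr do rewrite !mxE test_vector_conj mulrC.
rewrite sum_test_vector; under eq_bigr do rewrite mxE.
under [X in _ - _ * X]eq_bigr do rewrite mxE.
rewrite !sum_test_vector !mxE /gram_pos /gram_neg.
case: (p k) (p l) => a b [c d] /=.
by case: (a != b); case: (c != d); rewrite /= ?mul1r ?mul0r ?subr0 ?natrD ?add0n ?addn0; ring.
Qed.

Lemma laplacian_shift (d : nat) :
  laplacian C e - d%:R%:M = diag_mx (\row_u ((deg e u)%:R - d%:R)) - adjacency_mx.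
Proof.
apply/matrixP => i j; rewrite !mxE.
by case: eqVneq => [->|_]; rewrite ?mulr1n ?mulr0n; ring.
Qed.

(* Indeed the degree part is
   nonnegative there, while the adjacency part is a sum of nonpositive
   diagonal terms -2 A_ab. *)
Lemma test_form_nonneg r (p : 'I_r -> 'I_m * 'I_m) (d : nat) :
  irreflexive e ->
  (forall k l, k != l -> gram_pos e (p k) (p l) = gram_neg e (p k) (p l)) ->
  (forall k u, in_support (p k) u -> (d <= deg e u)%N) ->
  forall c : 'rV_r, 0 <= hform (laplacian C e - d%:R%:M) (c *m test_matrix p).
Proof.
move=> e_irr p_orth p_deg c; set W := test_matrix p.
rewrite laplacian_shift hformB hform_diag subr_ge0; apply: (@le_trans _ _ 0).
  have -> : hform adjacency_mx (c *m W) = (c *m (W *m adjacency_mx *m W^t*) *m c^t*) 0 0.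
    by rewrite /hform trmx_mul map_mxM !mulmxA.
  rewrite !mxE; apply: sumr_le0 => l _; rewrite !mxE (bigD1 l) //= big1 ?addr0.
    rewrite test_gram gram_pos_diag // sub0r mulrAC.
    by apply: mulr_ge0_le0; [exact: mul_conjC_ge0 | rewrite oppr_le0 ler0n].
  by move=> k ne_kl; rewrite test_gram p_orth ?subrr ?mulr0 // eq_sym.
apply: sumr_ge0 => u _; have [-> | cW_u] := eqVneq ((c *m W) 0 u) 0.
  by rewrite !mul0r.
have [k W_ku] : exists k, W k u != 0.
  apply/existsP; apply: contraR cW_u => /existsPn W_u0.
  by rewrite mxE big1 // => k _; rewrite (eqP (negbNE (W_u0 k))) mulr0.
rewrite [X in _ * X]mxE; apply: mulr_ge0; first exact: mul_conjC_ge0.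
by rewrite subr_ge0 ler_nat (p_deg k) // -test_vector_neq0; move: W_ku; rewrite mxE.
Qed.

End TestForm.

Theorem mainTheorem15 (R : rcfType) (m : nat) (e : rel 'I_m) (lam : seq R) :
  (6 <= m)%N -> simple_graph e -> laplacian_spectrum e lam ->
  (nth 0%N (degree_seq e) 5)%:R <= nth 0 lam 2.
Proof.
move=> m6 e_simple lam_spec; rewrite leNgt; apply/negP => lam_small.
set d := nth 0%N (degree_seq e) 5 in lam_small.
have [e_sym e_irr] := e_simple.
have [f [f_inj f_deg]] := top_degree_vertices e m6.
have [p [q [p_orth p_piv p_tri]]] :=
  six_vertex_certificate (g := relpre f e) (fun i j => e_sym _ _) (fun i => e_irr _).
pose W := test_matrix R[i] (fun k => pair_map f (p k)).
have W_entry k u : (W k (f u) != 0) = in_support (p k) u.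
  by rewrite mxE test_vector_neq0 in_support_map.
have rank_W : \rank W = 3.
  apply: (pivot_rank (q := fun k => f (q k))) => [k | k l lt_kl]; first by rewrite W_entry.
  by apply/eqP; rewrite -[_ == 0]negbK W_entry p_tri.
have W_form : forall c, 0 <= hform (laplacian R[i] e - d%:R%:M) (c *m W).
  apply: test_form_nonneg => // [k l ne_kl | k u].
    by rewrite (gram_pos_map _ f_inj) (gram_neg_map _ f_inj) p_orth.
  by case/orP => [/eqP -> | /andP[_ /eqP ->]]; apply: f_deg.
have := hermitian_eigen_count (laplacian_hermitian R[i] e_simple) rank_W W_form.
have m3 : (2 < m)%N by apply: leq_trans m6.
have := laplacian_eigen_count e_simple lam_spec m3 lam_small.
(* Both bounds count the same eigenvalues: (m - 2) + 3 <= m is absurd. *)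
rewrite rmorph_nat => lower /(leq_trans (leq_add lower (leqnn 3))).
lia.
Qed.
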